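(* For every $d\in\mathbb{N}$, the minimum size $n$ of a weighted projective $2$-design $\{x_k\}_{k\in[n]}$ for $\mathbb{C}^d$ equals $\operatorname{ebr}(\mathfrak{Z}_d)$.
   Context: Write $[n]=\{1,\dots,n\}$. Let $\Pi_d^{(2)}$ denote the orthogonal projection of $\mathbb{C}^d\otimes\mathbb{C}^d$ onto its symmetric subspace $(\mathbb{C}^d)^{\otimes 2}_{\mathrm{sym}}$ (which has dimension $\binom{d+1}{2}$). Unit vectors $\{x_k\}_{k\in[n]}$ in $\mathbb{C}^d$ form a weighted projective $2$-design (of size $n$) if there are weights $w_k\ge 0$ with $\sum_{k}w_k=1$ and $\sum_{k\in[n]}w_k(x_k\otimes x_k)(x_k\otimes x_k)^*=\binom{d+1}{2}^{-1}\Pi_d^{(2)}$. A linear map $\Phi:\mathbb{C}^{d\times d}\to\mathbb{C}^{m\times m}$ is entanglement breaking if it admits a decomposition $\Phi(X)=\sum_{k\in[n]}R_kXR_k^*$ for all $X$, with $R_k\in\mathbb{C}^{m\times d}$, $\sum_k R_k^*R_k=I_d$ and $\operatorname{rank}R_k=1$ for every $k$; its entanglement breaking rank $\operatorname{ebr}(\Phi)$ is the smallest such $n$. The map $\mathfrak{Z}_d:\mathbb{C}^{d\times d}\to\mathbb{C}^{d\times d}$ is $\mathfrak{Z}_d(X)=\frac{1}{d+1}(X+\operatorname{tr}(X)\, I_d)$ (it is entanglement breaking). *)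

From HB Require Import structures.
From mathcomp Require Import all_boot all_order all_algebra.
From mathcomp Require Import complex mxtens.
From mathcomp Require Import reals.
Set Implicit Arguments. Unset Strict Implicit. Unset Printing Implicit Defensive.
Import Order.TTheory GRing.Theory Num.Theory.
Local Open Scope ring_scope.
Local Open Scope complex_scope.

Definition mxadj (C : numClosedFieldType) m n (A : 'M[C]_(m, n)) : 'M[C]_(n, m) :=
  (map_mx Num.conj A)^T.

Definition swap_mx (C : pzRingType) (d : nat) : 'M[C]_(d * d) :=
  \matrix_(a, b) ((((mxtens_unindex a).1 == (mxtens_unindex b).2) &&
                   ((mxtens_unindex a).2 == (mxtens_unindex b).1))%:R).

Definition sym_proj (C : fieldType) (d : nat) : 'M[C]_(d * d) :=
  2%:R^-1 *: (1%:M + swap_mx C d).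

Definition weighted_proj_2design (C : numClosedFieldType) (d n : nat)
  (x : 'I_n -> 'cV[C]_d) : Prop :=
  (forall k, mxadj (x k) *m x k = 1%:M) /\
  exists w : 'I_n -> C,
    (forall k, 0 <= w k) /\ \sum_(k < n) w k = 1 /\
    \sum_(k < n) w k *: ((x k *t x k) *m mxadj (x k *t x k))
      = ('C(d.+1, 2))%:R^-1 *: sym_proj C d.

Definition eb_decomposition (C : numClosedFieldType) (d m : nat)
  (Phi : 'M[C]_d -> 'M[C]_m) (n : nat) (Rk : 'I_n -> 'M[C]_(m, d)) : Prop :=
  (forall X : 'M[C]_d, Phi X = \sum_(k < n) (Rk k *m X *m mxadj (Rk k))) /\
  \sum_(k < n) (mxadj (Rk k) *m Rk k) = 1%:M /\
  (forall k, \rank (Rk k) = 1%N).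

Definition is_min_nat (P : nat -> Prop) (n : nat) : Prop :=
  P n /\ forall n', P n' -> (n <= n')%N.

Definition is_ebr (C : numClosedFieldType) (d m : nat)
  (Phi : 'M[C]_d -> 'M[C]_m) (n : nat) : Prop :=
  is_min_nat (fun n' => exists Rk : 'I_n' -> 'M[C]_(m, d),
                          eb_decomposition Phi Rk) n.

Definition Zmap (C : fieldType) (d : nat) (X : 'M[C]_d) : 'M[C]_d :=
  (d.+1)%:R^-1 *: (X + \tr X *: 1%:M).

From HB Require Import structures.
From mathcomp Require Import all_boot all_order all_algebra.
From mathcomp Require Import complex mxtens.
From mathcomp Require Import reals.
From mathcomp Require Import zify ring.
From Stdlib Require Import Classical Wf_nat.
Set Implicit Arguments. Unset Strict Implicit. Unset Printing Implicit Defensive.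
Import Order.TTheory GRing.Theory Num.Theory.
Local Open Scope ring_scope.

(* Unit vectors x_k with weights
   w_k form a weighted 2-design iff their fourth moments
     sum_k w_k x_k(a) x_k(b) conj(x_k(c)) conj(x_k(e))
   equal ([a=c][b=e] + [a=e][b=c]) / (d(d+1))  (weighted_design_momentP), and
   operators R_k are Kraus operators of Z_d iff their second moments
     sum_k R_k(a,i) conj(R_k(b,j))
   equal ([a=i][b=j] + [i=j][a=b]) / (d+1)  (Zmap_krausP).  For rank-one
   operators R_k = c_k x_k x_k^* with |c_k|^2 = d w_k the two conditions
   coincide (rank_one_kraus_momentP).  Hence a design, after its zero weights
   are removed, gives an EB decomposition of Z_d of the same size
   (design_to_eb); conversely every rank-one Kraus operator of Z_d is a
   multiple of a rank-one projection (hermitian_outer_projection), so an EB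
   decomposition gives a design of the same size (eb_to_design).  The two
   sets of admissible sizes therefore coincide; the standard basis together
   with all vectors of fourth roots of unity is a design (design_exists), so
   the sets are nonempty and share their least element. *)

Lemma sum_mul_delta (R : pzSemiRingType) d (F : 'I_d -> R) (a : 'I_d) :
  \sum_(i < d) F i * (a == i)%:R = F a.
Proof.
rewrite (bigD1 a) //= eqxx mulr1 big1 ?addr0 // => i.
by rewrite eq_sym => /negbTE ->; rewrite mulr0.
Qed.

Lemma bin2S_mul2 d : ('C(d.+1, 2) * 2 = d * d.+1)%N.
Proof. by elim: d => [//|d IH]; rewrite binS bin1 mulnDl IH; lia. Qed.

Section Moments.
Variable C : numClosedFieldType.

Definition unit_vector d (x : 'cV[C]_d) : Prop :=
  \sum_(t < d) (x t 0)^* * x t 0 = 1.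

(* Fourth-moment condition of a weighted family: it is the entrywise form of
   sum_k w_k (x_k x_k^T)(x_k x_k^T)^* = Pi_sym / C(d+1, 2). *)
Definition design_moment d (I : finType) (w : I -> C) (x : I -> 'cV[C]_d) :=
  forall a b c e : 'I_d,
  \sum_(k : I) w k * (x k a 0 * x k b 0 * ((x k c 0)^* * (x k e 0)^*)) =
  ((d * d.+1)%:R)^-1 * (((a == c) && (b == e))%:R + ((a == e) && (b == c))%:R).

Lemma mxadj_entry m p (M : 'M[C]_(m, p)) i j : mxadj M i j = (M j i)^*.
Proof. by rewrite /mxadj !mxE. Qed.

Lemma unit_vectorP d (x : 'cV[C]_d) : mxadj x *m x = 1%:M <-> unit_vector x.
Proof.
have -> : mxadj x *m x = (\sum_(t < d) (x t 0)^* * x t 0)%:M.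
  apply/matrixP => i j; rewrite !ord1 !mxE eqxx mulr1n.
  by apply: eq_bigr => t _; rewrite mxadj_entry.
by split=> [/matrixP/(_ 0 0)|->]; rewrite // !mxE eqxx !mulr1n.
Qed.

Lemma tensor_design_entry d n (w : 'I_n -> C) (x : 'I_n -> 'cV[C]_d) a b c e :
  (\sum_(k < n) w k *: ((x k *t x k) *m mxadj (x k *t x k)))
     (mxtens_index (a, b)) (mxtens_index (c, e)) =
  \sum_(k < n) w k * (x k a 0 * x k b 0 * ((x k c 0)^* * (x k e 0)^*)).
Proof.
rewrite summxE; apply: eq_bigr => k _.
rewrite mxE mxE big_ord1 !mxE !mxtens_indexK /= !rmorphM.
by rewrite !(ord1 (Ordinal _)).
Qed.

Lemma sym_proj_entry d (a b c e : 'I_d) :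
  (('C(d.+1, 2))%:R^-1 *: sym_proj C d) (mxtens_index (a, b)) (mxtens_index (c, e)) =
  ((d * d.+1)%:R)^-1 * (((a == c) && (b == e))%:R + ((a == e) && (b == c))%:R).
Proof.
rewrite /sym_proj !mxE !mxtens_indexK /= mulrA -invfM -natrM bin2S_mul2.
by rewrite (inj_eq (can_inj (@mxtens_indexK d d))) xpair_eqE.
Qed.

Lemma weighted_design_momentP d n (x : 'I_n -> 'cV[C]_d) :
  weighted_proj_2design x <->
  (forall k, unit_vector (x k)) /\ exists w : 'I_n -> C,
     (forall k, 0 <= w k) /\ \sum_(k < n) w k = 1 /\ design_moment w x.
Proof.
rewrite /weighted_proj_2design; split.
  case=> Hu [w [Hw [Hs Hm]]]; split=> [k|]; first exact/unit_vectorP.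
  exists w; split=> //; split=> // a b c e.
  by rewrite -tensor_design_entry Hm sym_proj_entry.
case=> Hu [w [Hw [Hs Hm]]]; split=> [k|]; first exact/unit_vectorP.
exists w; split=> //; split=> //; apply/matrixP => A B.
case: (mxtens_indexP A) => a b; case: (mxtens_indexP B) => c e.
by rewrite tensor_design_entry sym_proj_entry Hm.
Qed.

End Moments.

Lemma mxtrace_delta (R : pzRingType) d (i j : 'I_d) :
  \tr (delta_mx i j : 'M[R]_d) = (i == j)%:R.
Proof.
rewrite /mxtrace (bigD1 i) //= big1 ?addr0 ?mxE ?eqxx //.
by move=> t /negbTE Ht; rewrite mxE Ht.
Qed.

Lemma Zmap_entry (F : fieldType) d (X : 'M[F]_d) (a b : 'I_d) :
  Zmap X a b = (d.+1%:R)^-1 * (X a b + \tr X * (a == b)%:R).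
Proof. by rewrite /Zmap !mxE. Qed.

Lemma sum_delta_pair (R : comPzRingType) d (X : 'M[R]_d) (a b : 'I_d) :
  \sum_(i < d) \sum_(j < d) ((a == i) && (b == j))%:R * X i j = X a b.
Proof.
under eq_bigr do (under eq_bigr do rewrite -mulnb natrM mulrAC); rewrite /=.
under eq_bigr do rewrite sum_mul_delta.
by under eq_bigr do rewrite mulrC; rewrite sum_mul_delta.
Qed.

Lemma sum_delta_trace (R : comPzRingType) d (X : 'M[R]_d) (a b : 'I_d) :
  \sum_(i < d) \sum_(j < d) ((i == j) && (a == b))%:R * X i j =
  \tr X * (a == b)%:R.
Proof.
rewrite big_distrl /=; apply: eq_bigr => i _.
under eq_bigr do rewrite -mulnb natrM mulrC mulrA.
by rewrite -big_distrl /= sum_mul_delta.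
Qed.

Section KrausOfZ.
Variable C : numClosedFieldType.

(* Second-moment condition on a family of operators; it is the entrywise form
   of "the R_k form a Kraus decomposition of Z_d" (Zmap_krausP). *)
Definition kraus_moment d n (R : 'I_n -> 'M[C]_d) : Prop :=
  forall a i b j : 'I_d, \sum_(k < n) R k a i * (R k b j)^* =
   (d.+1%:R)^-1 * (((a == i) && (b == j))%:R + ((i == j) && (a == b))%:R).

Lemma kraus_term_entry d (R X : 'M[C]_d) a b :
  (R *m X *m mxadj R) a b = \sum_(i < d) \sum_(j < d) R a i * X i j * (R b j)^*.
Proof.
rewrite mxE exchange_big /=; apply: eq_bigr => j _.
by rewrite mxadj_entry !mxE big_distrl.
Qed.

(* Z_d(X) = sum_k R_k X R_k^* for all X iff the R_k satisfy the second-moment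
   condition: test on the matrix units for one direction, expand for the other. *)
Lemma Zmap_krausP d n (R : 'I_n -> 'M[C]_d) :
  (forall X, Zmap X = \sum_(k < n) (R k *m X *m mxadj (R k))) <-> kraus_moment R.
Proof.
split=> [HZ a i b j | HR X].
  transitivity (Zmap (delta_mx i j : 'M[C]_d) a b); last first.
    by rewrite Zmap_entry mxtrace_delta mxE -natrM mulnb.
  rewrite HZ summxE; apply: eq_bigr => k _.
  rewrite kraus_term_entry (bigD1 i) //= (bigD1 j) //= !mxE !eqxx /= mulr1.
  rewrite !big1 ?addr0 // => t /negbTE Ht.
    by rewrite big1 // => s _; rewrite mxE Ht mulr0 mul0r.
  by rewrite mxE Ht andbF mulr0 mul0r.
apply/matrixP => a b; rewrite Zmap_entry summxE.
under eq_bigr do rewrite kraus_term_entry.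
rewrite exchange_big /=.
under eq_bigr do rewrite exchange_big /=.
under eq_bigr do under eq_bigr do
   (under eq_bigr do rewrite mulrAC; rewrite -big_distrl /= HR).
under eq_bigr do under eq_bigr do rewrite -mulrA mulrDl.
under eq_bigr do rewrite -mulr_sumr big_split /=.
by rewrite -mulr_sumr big_split /= sum_delta_pair sum_delta_trace.
Qed.

End KrausOfZ.

Section RankOneKraus.
Variable C : numClosedFieldType.

(* Contracting two indices of the fourth moment of unit vectors gives the
   second moment: sum_k w_k x_k x_k^* = I / d. *)
Lemma design_second_moment d (I : finType) (w : I -> C) (x : I -> 'cV[C]_d) :
  (forall k, unit_vector (x k)) -> design_moment w x ->
  forall a e, \sum_(k : I) w k * (x k a 0 * (x k e 0)^*) = (d%:R)^-1 * (a == e)%:R.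
Proof.
move=> Hu Hm a e.
transitivity (\sum_(k : I) w k * (x k a 0 * (x k e 0)^*) *
                \sum_(t < d) (x k t 0)^* * x k t 0).
  by apply: eq_bigr => k _; rewrite Hu mulr1.
under eq_bigr do rewrite mulr_sumr.
rewrite exchange_big /=.
transitivity (\sum_(t < d) ((d * d.+1)%:R)^-1 *
   (((a == t) && (t == e))%:R + ((a == e) && (t == t))%:R) :> C).
  by apply: eq_bigr => t _; rewrite -Hm; apply: eq_bigr => k _; ring.
rewrite -mulr_sumr big_split /= (bigD1 a) //= eqxx /= big1; last first.
  by move=> t /negbTE Ht; rewrite eq_sym Ht.
under eq_bigr do rewrite eqxx andbT.
rewrite addr0 sumr_const card_ord.
case: (a == e); last by rewrite mulr0 mul0rn addr0 mulr0.
have d_gt0 : (0 < d)%N := leq_ltn_trans (leq0n a) (ltn_ord a).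
have dC_neq0 : (d%:R != 0 :> C) by rewrite pnatr_eq0 -lt0n.
have d1C_neq0 : (d%:R + 1 != 0 :> C) by rewrite -[1]/(1%:R) -natrD addn1 pnatr_eq0.
rewrite -mulr_natr mul1r -addn1 natrM natrD.
by field; rewrite dC_neq0 d1C_neq0.
Qed.

(* Taking the trace of the second moment: the weights have total mass one. *)
Lemma design_weights_sum1 d (I : finType) (w : I -> C) (x : I -> 'cV[C]_d) :
  (0 < d)%N -> (forall k, unit_vector (x k)) -> design_moment w x ->
  \sum_(k : I) w k = 1.
Proof.
move=> d_gt0 Hu Hm.
transitivity (\sum_(k : I) w k * \sum_(t < d) (x k t 0)^* * x k t 0).
  by apply: eq_bigr => k _; rewrite Hu mulr1.
under eq_bigr do rewrite mulr_sumr.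
rewrite exchange_big /=.
transitivity (\sum_(t < d) (d%:R)^-1 * (t == t)%:R :> C).
  apply: eq_bigr => t _; rewrite -(design_second_moment Hu Hm).
  by apply: eq_bigr => k _; rewrite (mulrC (x k t 0)^*).
under eq_bigr do rewrite eqxx mulr1.
by rewrite sumr_const card_ord -(mulr_natr d%:R^-1) mulVf // pnatr_eq0 -lt0n.
Qed.

Lemma rank_one_entry d (c : C) (x : 'cV[C]_d) a i :
  (c *: (x *m mxadj x)) a i = c * (x a 0 * (x i 0)^*).
Proof. by rewrite !mxE big_ord1 mxadj_entry. Qed.

Lemma rank_one_kraus_momentP d n (c w : 'I_n -> C) (x : 'I_n -> 'cV[C]_d) :
  (0 < d)%N -> (forall k, w k * d%:R = c k * (c k)^*) ->
  kraus_moment (fun k => c k *: (x k *m mxadj (x k))) <-> design_moment w x.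
Proof.
move=> d_gt0 Hw.
have dC_neq0 : (d%:R != 0 :> C) by rewrite pnatr_eq0 -lt0n.
have second_to_fourth : forall a i b j : 'I_d,
  \sum_(k < n) (c k *: (x k *m mxadj (x k))) a i * ((c k *: (x k *m mxadj (x k))) b j)^*
  = d%:R * \sum_(k < n) w k * (x k a 0 * x k j 0 * ((x k i 0)^* * (x k b 0)^*)).
  move=> a i b j; rewrite mulr_sumr; apply: eq_bigr => k _.
  rewrite !rank_one_entry !rmorphM /= conjCK.
  transitivity (c k * (c k)^* * (x k a 0 * x k j 0 * ((x k i 0)^* * (x k b 0)^*))).
    by ring.
  by rewrite -Hw; ring.
split=> [HK a b c' e | Hm a i b j].
  have := HK a c' e b; rewrite second_to_fourth => /(congr1 (fun t => d%:R^-1 * t)).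
  rewrite mulKf // => ->.
  rewrite natrM invfM [e == b]eq_sym (andbC (c' == b)) [c' == b]eq_sym.
  by rewrite -mulrA mulrA (mulrC d%:R^-1).
rewrite second_to_fourth Hm natrM invfM !mulrA mulfV // mul1r.
by rewrite [j == b]eq_sym (andbC (a == b)) [j == i]eq_sym.
Qed.

Lemma rank_scaled_projection d (c : C) (x : 'cV[C]_d) :
  c != 0 -> unit_vector x -> \rank (c *: (x *m mxadj x)) = 1%N.
Proof.
move=> c_neq0 Hx; apply/eqP; rewrite eqn_leq; apply/andP; split.
  apply: leq_trans (mxrank_scale _ _) _; apply: leq_trans (mxrankM_maxl _ _) _.
  exact: rank_leq_col.
rewrite lt0n mxrank_eq0; apply/eqP => H0.
have : \tr (c *: (x *m mxadj x)) = c.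
  rewrite /mxtrace; under eq_bigr do rewrite rank_one_entry.
  rewrite -mulr_sumr -[RHS]mulr1 -Hx; congr (_ * _).
  by apply: eq_bigr => t _; rewrite mulrC.
by rewrite H0 mxtrace0 => /esym/eqP; rewrite (negbTE c_neq0).
Qed.

End RankOneKraus.

Section DesignToEB.
Variable C : numClosedFieldType.

(* Zero weights can be removed without changing the size of the family:
   every slot of zero weight is reassigned to a copy of a vector x_k0 of
   positive weight, and w_k0 is shared equally among these copies. *)
Lemma positive_weights d n (w : 'I_n -> C) (x : 'I_n -> 'cV[C]_d) :
  (forall k, unit_vector (x k)) -> (forall k, 0 <= w k) -> \sum_(k < n) w k = 1 ->
  exists (w' : 'I_n -> C) (x' : 'I_n -> 'cV[C]_d),
    [/\ forall k, unit_vector (x' k), forall k, 0 < w' k &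
    forall g : 'cV[C]_d -> C, \sum_(k < n) w' k * g (x' k) = \sum_(k < n) w k * g (x k)].
Proof.
move=> Hu Hw Hs.
have [k0 wk0_neq0] : exists k0, w k0 != 0.
  case: (pickP (fun k => w k != 0)) => [k0 Hk0|w0]; first by exists k0.
  move: Hs; rewrite big1 => [/esym/eqP|k _]; first by rewrite oner_eq0.
  exact/eqP/negbFE/w0.
pose P := [pred k | (w k == 0) || (k == k0)].
have cardP_gt0 : (0 < #|P|)%N by apply/card_gt0P; exists k0; rewrite inE /= eqxx orbT.
have cardPC_neq0 : (#|P|%:R != 0 :> C) by rewrite pnatr_eq0 -lt0n.
have wk0_gt0 : 0 < w k0 by rewrite lt_def wk0_neq0 Hw.
exists (fun k => if P k then w k0 / #|P|%:R else w k).
exists (fun k => if w k == 0 then x k0 else x k).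
split=> [k|k|g]; first by case: ifP.
  case: ifP => HP; first by rewrite divr_gt0 // ltr0n.
  by rewrite lt_def Hw andbT; move: HP; rewrite /P /=; case: (w k == 0).
rewrite [LHS](bigID P) [RHS](bigID P) /=; congr (_ + _); last first.
  apply: eq_bigr => k HP; rewrite (negbTE HP).
  by move: HP; rewrite /P /= negb_or => /andP [/negbTE -> _].
transitivity (\sum_(k < n | P k) w k0 / #|P|%:R * g (x k0)).
  apply: eq_bigr => k HP; rewrite HP; case: eqP => // Hne.
  by move: HP; rewrite /P /=; case: eqP => //= _ /eqP ->.
rewrite sumr_const.
change (w k0 / #|P|%:R * g (x k0) *+ #|P| = \sum_(k < n | P k) w k * g (x k)).
rewrite -mulr_natr mulrAC mulfVK //.
rewrite (bigD1 k0) /=; last by rewrite /P /= eqxx orbT.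
rewrite big1 ?addr0 // => k /andP [HP Hk].
by move: HP; rewrite /P /= (negbTE Hk) orbF => /eqP ->; rewrite mul0r.
Qed.

(* A weighted design {x_k} yields the EB decomposition R_k = sqrt(d w_k) x_k x_k^*
   of Z_d with the same number of terms. *)
Lemma design_to_eb d n (x : 'I_n -> 'cV[C]_d) :
  (0 < d)%N -> weighted_proj_2design x ->
  exists R : 'I_n -> 'M[C]_d, eb_decomposition (@Zmap C d) R.
Proof.
move=> d_gt0 /weighted_design_momentP [Hu [w [Hw [Hs Hm]]]].
have [w' [x' [Hu' Hw' Hg]]] := positive_weights Hu Hw Hs.
have Hm' : design_moment w' x'.
  move=> a b c e; rewrite -(Hm a b c e).
  exact: (Hg (fun y => y a 0 * y b 0 * ((y c 0)^* * (y e 0)^*))).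
have dC_neq0 : (d%:R != 0 :> C) by rewrite pnatr_eq0 -lt0n.
pose c k := sqrtC (w' k * d%:R).
have Hc : forall k, w' k * d%:R = c k * (c k)^*.
  move=> k; have h0 : 0 <= w' k * d%:R by rewrite mulr_ge0 ?ler0n // ltW.
  by rewrite /c geC0_conj ?sqrtC_ge0 // -expr2 sqrtCK.
exists (fun k => c k *: (x' k *m mxadj (x' k))); split.
  exact/Zmap_krausP/(rank_one_kraus_momentP _ d_gt0 Hc).
split=> [|k]; last first.
  by apply: rank_scaled_projection => //; rewrite sqrtC_eq0 mulf_neq0 // gt_eqF.
apply/matrixP => a b; rewrite summxE [RHS]mxE.
transitivity (\sum_(k < n) d%:R * (w' k * (x' k a 0 * (x' k b 0)^*))).
  apply: eq_bigr => k _; rewrite mxE.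
  under eq_bigr do rewrite mxadj_entry !rank_one_entry !rmorphM /= conjCK.
  transitivity ((c k)^* * c k * (x' k a 0 * (x' k b 0)^*) *
                 \sum_(t < d) (x' k t 0)^* * x' k t 0).
    by rewrite mulr_sumr; apply: eq_bigr => t _; ring.
  by rewrite Hu' mulr1 (mulrC (c k)^*) -Hc; ring.
by rewrite -mulr_sumr (design_second_moment Hu' Hm') mulrA mulfV // mul1r.
Qed.

End DesignToEB.

Lemma rank_one_factor (F : fieldType) d (A : 'M[F]_d) :
  \rank A = 1%N -> exists (P : 'cV[F]_d) (Q : 'rV[F]_d), A = P *m Q.
Proof.
move=> rkA; have := mulmx_base A; move: (col_base A) (row_base A).
by rewrite rkA => P Q <-; exists P, Q.
Qed.

Lemma outer_entry (R : pzRingType) d (P : 'cV[R]_d) (Q : 'rV[R]_d) a b :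
  (P *m Q) a b = P a 0 * Q 0 b.
Proof. by rewrite mxE big_ord1. Qed.

Section EBToDesign.
Variable C : numClosedFieldType.

(* Every rank-one Kraus operator P_k Q_k of Z_d satisfies
   P_k(y) conj(Q_k(x)) = P_k(x) conj(Q_k(y)): with phi_k(x,y) = P_k(y) conj(Q_k(x)),
   the second-moment condition gives sum_k |phi_k(x,y) - phi_k(y,x)|^2 = 0. *)
Lemma kraus_outer_hermitian d n (P : 'I_n -> 'cV[C]_d) (Q : 'I_n -> 'rV[C]_d) :
  kraus_moment (fun k => P k *m Q k) ->
  forall k x y, P k y 0 * (Q k 0 x)^* = P k x 0 * (Q k 0 y)^*.
Proof.
move=> HK.
pose phi k x y := P k y 0 * (Q k 0 x)^*.
have phi_gram : forall x' y' x y, \sum_(k < n) phi k x' y' * (phi k x y)^* =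
   (d.+1%:R)^-1 * (((y' == x) && (y == x'))%:R + ((x == x') && (y' == y))%:R).
  move=> x' y' x y; rewrite -HK; apply: eq_bigr => k _.
  by rewrite !outer_entry /phi !rmorphM /= conjCK; ring.
move=> k x y.
have antisym_norm0 :
    \sum_(k < n) (phi k x y - phi k y x) * (phi k x y - phi k y x)^* = 0.
  under eq_bigr do rewrite rmorphB /= mulrBl !mulrBr.
  rewrite !sumrB !phi_gram.
  have [->|x_neq_y] := eqVneq x y; first by rewrite !eqxx /=; ring.
  have y_neq_x : y != x by rewrite eq_sym.
  by rewrite !eqxx ?(negbTE x_neq_y) ?(negbTE y_neq_x) /=; ring.
have := @psumr_eq0P _ _ _ _ (fun k _ => mul_conjC_ge0 _) antisym_norm0 k isT.
by move/eqP; rewrite mul_conjC_eq0 subr_eq0 => /eqP.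
Qed.

(* A nonzero outer product P Q with that symmetry is a multiple of the
   projection onto the unit vector Q^* / |Q|. *)
Lemma hermitian_outer_projection d (P : 'cV[C]_d) (Q : 'rV[C]_d) :
  P *m Q != 0 -> (forall x y, P y 0 * (Q 0 x)^* = P x 0 * (Q 0 y)^*) ->
  exists (c : C) (x : 'cV[C]_d), unit_vector x /\ P *m Q = c *: (x *m mxadj x).
Proof.
move=> PQ_neq0 Hsym.
have [x0 Qx0_neq0] : exists x0, Q 0 x0 != 0.
  case: (pickP (fun t => Q 0 t != 0)) => [x0 Hx0|Q0]; first by exists x0.
  exfalso; move/eqP: PQ_neq0; apply; apply/matrixP => a b; rewrite outer_entry mxE.
  by move/negbFE/eqP: (Q0 b) => ->; rewrite mulr0.
pose v : 'cV[C]_d := \col_a (Q 0 a)^*.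
pose s := \sum_(t < d) (v t 0)^* * v t 0.
have sq_ge0 : forall t, 0 <= (v t 0)^* * v t 0 by move=> t; rewrite mulrC mul_conjC_ge0.
have s_neq0 : s != 0.
  apply/eqP => s0; have := @psumr_eq0P _ _ _ _ (fun t _ => sq_ge0 t) s0 x0 isT.
  by move/eqP; rewrite mulrC mul_conjC_eq0 mxE conjC_eq0 (negbTE Qx0_neq0).
pose nv := sqrtC s.
have nv_ge0 : 0 <= nv by rewrite sqrtC_ge0 sumr_ge0.
have nv2 : nv ^+ 2 = s by rewrite sqrtCK.
have nv_neq0 : nv != 0 by apply: contraNneq s_neq0 => nv0; rewrite -nv2 nv0 expr0n.
pose mu := P x0 0 / (Q 0 x0)^*.
have cQx0_neq0 : (Q 0 x0)^* != 0 by rewrite conjC_eq0.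
have P_prop : forall a, P a 0 = mu * (Q 0 a)^* by move=> a; rewrite /mu mulrAC -Hsym mulfK.
exists (mu * s), (nv^-1 *: v); split.
  transitivity (nv^-1 * nv^-1 * s); last by rewrite -nv2; field.
  rewrite /unit_vector /s mulr_sumr; apply: eq_bigr => t _.
  by rewrite !mxE rmorphM /= geC0_conj ?invr_ge0 //; ring.
apply/matrixP => a b; rewrite outer_entry rank_one_entry !mxE P_prop.
rewrite !rmorphM /= conjCK (geC0_conj (x := nv^-1)) ?invr_ge0 // -nv2.
by field.
Qed.

(* An EB decomposition {R_k} of Z_d yields a weighted design of the same size:
   R_k = c_k x_k x_k^* and w_k = |c_k|^2 / d. *)
Lemma eb_to_design d n (R : 'I_n -> 'M[C]_d) :
  (0 < d)%N -> eb_decomposition (@Zmap C d) R ->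
  exists x : 'I_n -> 'cV[C]_d, weighted_proj_2design x.
Proof.
move=> d_gt0 [HZ [_ Hrk]].
have HK := (Zmap_krausP R).1 HZ.
have /fin_all_exists [PQ HPQ] :
    forall k, exists PQ : 'cV[C]_d * 'rV[C]_d, R k = PQ.1 *m PQ.2.
  by move=> k; have [P [Q ->]] := rank_one_factor (Hrk k); exists (P, Q).
have HK' : kraus_moment (fun k => (PQ k).1 *m (PQ k).2).
  by move=> a i b j; rewrite -HK; apply: eq_bigr => k _; rewrite HPQ.
have /fin_all_exists [cx Hcx] : forall k, exists cx : C * 'cV[C]_d,
    unit_vector cx.2 /\ R k = cx.1 *: (cx.2 *m mxadj cx.2).
  move=> k; have Rk_neq0 : (PQ k).1 *m (PQ k).2 != 0.
    by rewrite -HPQ -mxrank_eq0 Hrk.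
  have [c [x [Hu HRk]]] :=
    hermitian_outer_projection Rk_neq0 (kraus_outer_hermitian HK' k).
  by exists (c, x); rewrite HPQ.
pose c k := (cx k).1; pose x k := (cx k).2.
exists x; apply/weighted_design_momentP.
have Hu : forall k, unit_vector (x k) by move=> k; case: (Hcx k).
pose w k := c k * (c k)^* / d%:R.
have Hw : forall k, w k * d%:R = c k * (c k)^*.
  by move=> k; rewrite /w mulfVK // pnatr_eq0 -lt0n.
have Hm : design_moment w x.
  apply/(rank_one_kraus_momentP _ d_gt0 Hw) => a i b j; rewrite -HK.
  by apply: eq_bigr => k _; case: (Hcx k) => _ ->.
split=> //; exists w; split.
  by move=> k; rewrite /w divr_ge0 ?mul_conjC_ge0 ?ler0n.
by split=> //; apply: design_weights_sum1 d_gt0 Hu Hm.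
Qed.

End EBToDesign.

(* Exponent of t in the character x |-> x_a x_b conj(x_c) conj(x_e), when x
   ranges over vectors of fourth roots of unity (conj(i^m) = i^(3m)). *)
Definition phase_exponent (T : eqType) (a b c e t : T) : nat :=
  ((t == a) + (t == b) + 3 * (t == c) + 3 * (t == e))%N.

Lemma phase_exponent_dvd4P (T : eqType) (a b c e : T) :
  (forall t, 4 %| phase_exponent a b c e t)%N <->
  ((a == c) && (b == e)) || ((a == e) && (b == c)).
Proof.
split=> [H | /orP[] /andP [/eqP -> /eqP ->] t]; last 2 first.
- by rewrite /phase_exponent; case: (t == _); case: (t == _).
- by rewrite /phase_exponent; case: (t == _); case: (t == _).
move: (H a) (H b); rewrite /phase_exponent.
by repeat (case: eqP => //= ?; subst; rewrite ?eqxx /=).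
Qed.

(* Both families contribute to the moment: the basis vectors only on the
   diagonal a = b = c = e, the phase vectors on the pairings. *)
Lemma diagonal_plus_pairing (T : eqType) (a b c e : T) :
  ((b == a) * ((c == a) * (e == a)) + (((a == c) && (b == e)) || ((a == e) && (b == c))) =
   ((a == c) && (b == e)) + ((a == e) && (b == c)))%N.
Proof.
by repeat (let H := fresh in case: eqP => [?|H]; [subst|]; rewrite ?eqxx /=);
  try congruence.
Qed.

Lemma sumn_mul_delta d (F : 'I_d -> nat) (a : 'I_d) :
  (\sum_(t < d) F t * (t == a) = F a)%N.
Proof.
rewrite (bigD1 a) //= eqxx muln1 big1 ?addn0 // => t /negbTE ->.
by rewrite muln0.
Qed.

Section FourthRootsOfUnity.
Variable C : numClosedFieldType.

Lemma expi4 : 'i ^+ 4 = 1 :> C.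
Proof. by rewrite -[4%N]/(2 * 2)%N exprM sqrCi sqrrN expr1n. Qed.

Lemma expi_eq1 m : ('i ^+ m == 1 :> C) = (4 %| m)%N.
Proof.
have one_neq_m1 : (1 : C) != -1.
  by rewrite -addr_eq0 -[1 + 1]/(2%:R) pnatr_eq0.
rewrite {1}(divn_eq m 4) exprD (mulnC (m %/ 4)%N) exprM expi4 expr1n mul1r.
rewrite /dvdn; have : (m %% 4 < 4)%N by rewrite ltn_pmod.
case: (m %% 4)%N => [|[|[|[|r]]]] // _.
- by rewrite expr0 eqxx.
- apply/eqP => i1; have := sqrCi C; rewrite expr1 in i1; rewrite i1 expr1n.
  by move/eqP; rewrite (negbTE one_neq_m1).
- by rewrite sqrCi eq_sym (negbTE one_neq_m1).
- rewrite exprS sqrCi mulrN1; apply/eqP => mi1.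
  have := sqrCi C; rewrite -sqrrN mi1 expr1n.
  by move/eqP; rewrite (negbTE one_neq_m1).
Qed.

Lemma sum_expi_powers m :
  \sum_(s < 4) ('i ^+ m) ^+ s = (4 %| m)%:R * 4%:R :> C.
Proof.
have [dvd4 | ndvd4] := boolP (4 %| m)%N.
  have /eqP -> : ('i ^+ m == 1 :> C) by rewrite expi_eq1.
  by rewrite mul1r; under eq_bigr do rewrite expr1n; rewrite sumr_const card_ord.
rewrite mul0r; apply/eqP.
have : ('i ^+ m - 1) * \sum_(s < 4) ('i ^+ m) ^+ s = 0 :> C.
  by rewrite -subrX1 -exprM mulnC exprM expi4 expr1n subrr.
by move/eqP; rewrite mulf_eq0 subr_eq0 expi_eq1 (negbTE ndvd4).
Qed.

Lemma conj_expi n : ('i ^+ n)^* = 'i ^+ (3 * n) :> C.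
Proof. by rewrite rmorphXn /= conjCi exprM exprS sqrCi mulrN1. Qed.

Lemma prod_nat_bool d (P : 'I_d -> bool) :
  \prod_(t < d) (P t)%:R = ([forall t, P t])%:R :> C.
Proof.
have [/forallP allP | ] := boolP [forall t, P t].
  by rewrite big1 // => t _; rewrite allP.
rewrite negb_forall => /existsP [t Pt_false].
by rewrite (bigD1 t) //= (negbTE Pt_false) mul0r.
Qed.

(* Summing the character over all phase functions f : [d] -> Z/4 factorises
   over coordinates. *)
Lemma phase_moment d (a b c e : 'I_d) :
  \sum_(f : {ffun 'I_d -> 'I_4})
     'i ^+ (f a) * 'i ^+ (f b) * (('i ^+ (f c))^* * ('i ^+ (f e))^*) =
  (4 ^ d)%:R * ([forall t, 4 %| phase_exponent a b c e t]%N)%:R :> C.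
Proof.
transitivity (\sum_(f : {ffun 'I_d -> 'I_4})
                \prod_(t < d) ('i ^+ phase_exponent a b c e t) ^+ (f t) : C).
  apply: eq_bigr => f _; rewrite !conj_expi -!exprD.
  under eq_bigr do rewrite -exprM mulnC.
  rewrite prodrXr; congr (_ ^+ _).
  rewrite /phase_exponent; under eq_bigr do rewrite !mulnDr.
  have sum0 : (\sum_(i < d) f i * 0 = 0)%N by rewrite big1 // => i _; rewrite muln0.
  by rewrite !big_split /= !sumn_mul_delta sum0; lia.
rewrite -(bigA_distr_bigA (fun t (s : 'I_4) => ('i ^+ phase_exponent a b c e t) ^+ s)) /=.
under eq_bigr do rewrite sum_expi_powers.
by rewrite big_split /= prod_nat_bool prodr_const card_ord natrX mulrC.
Qed.

End FourthRootsOfUnity.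

Section BasisPhaseDesign.
Variables (C : numClosedFieldType) (d : nat).
Hypothesis d_gt0 : (0 < d)%N.

Local Notation index := ('I_d + {ffun 'I_d -> 'I_4})%type.
Local Notation sqrtd := (sqrtC (d%:R : C)).

Definition basis_phase_vec (t : index) : 'cV[C]_d :=
  match t with
  | inl i => \col_a (a == i)%:R
  | inr f => \col_a ('i ^+ f a / sqrtd)
  end.

Definition basis_phase_weight (t : index) : C :=
  match t with
  | inl _ => ((d * d.+1)%:R)^-1
  | inr _ => d%:R / (d.+1%:R * (4 ^ d)%:R)
  end.

Let dC_neq0 : (d%:R != 0 :> C). Proof. by rewrite pnatr_eq0 -lt0n. Qed.
Let sqrtd_ge0 : 0 <= sqrtd. Proof. by rewrite sqrtC_ge0 ler0n. Qed.
Let sqrtd_sq : sqrtd ^+ 2 = d%:R. Proof. exact: sqrtCK. Qed.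
Let conj_expiK n : ('i ^+ n)^* * 'i ^+ n = 1 :> C.
Proof. by rewrite conj_expi -exprD -mulSnr exprM expi4 expr1n. Qed.

Lemma basis_phase_weight_ge0 t : 0 <= basis_phase_weight t.
Proof. by case: t => [i|f] /=; rewrite ?invr_ge0 ?divr_ge0 ?mulr_ge0 ?ler0n. Qed.

Lemma basis_phase_unit t : unit_vector (basis_phase_vec t).
Proof.
rewrite /unit_vector; case: t => [i|f] /=.
  under eq_bigr do rewrite mxE rmorph_nat -natrM mulnb andbb.
  by rewrite (bigD1 i) //= eqxx big1 ?addr0 // => t /negbTE ->.
transitivity (\sum_(t < d) (d%:R)^-1 : C).
  apply: eq_bigr => t _; rewrite mxE rmorphM /= (geC0_conj (x := sqrtd^-1)) ?invr_ge0 //.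
  by rewrite mulrACA conj_expiK mul1r -invfM -expr2 sqrtd_sq.
by rewrite sumr_const card_ord -(mulr_natr d%:R^-1) mulVf.
Qed.

Lemma basis_part_moment (a b c e : 'I_d) :
  \sum_(i < d) basis_phase_weight (inl i) *
    (basis_phase_vec (inl i) a 0 * basis_phase_vec (inl i) b 0 *
     ((basis_phase_vec (inl i) c 0)^* * (basis_phase_vec (inl i) e 0)^*)) =
  ((d * d.+1)%:R)^-1 * ((b == a) * ((c == a) * (e == a)))%:R.
Proof.
under eq_bigr do rewrite /= !mxE !rmorph_nat.
rewrite (bigD1 a) //= eqxx mul1r big1 ?addr0 ?natrM // => i.
by move/negbTE; rewrite eq_sym => ->; rewrite !mul0r mulr0.
Qed.

Lemma phase_part_moment (a b c e : 'I_d) :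
  \sum_(f : {ffun 'I_d -> 'I_4}) basis_phase_weight (inr f) *
    (basis_phase_vec (inr f) a 0 * basis_phase_vec (inr f) b 0 *
     ((basis_phase_vec (inr f) c 0)^* * (basis_phase_vec (inr f) e 0)^*)) =
  ((d * d.+1)%:R)^-1 * ([forall t, 4 %| phase_exponent a b c e t]%N)%:R.
Proof.
transitivity (d%:R / (d.+1%:R * (4 ^ d)%:R) * (sqrtd ^+ 2)^-1 * (sqrtd ^+ 2)^-1 *
  \sum_(f : {ffun 'I_d -> 'I_4})
    'i ^+ (f a) * 'i ^+ (f b) * (('i ^+ (f c))^* * ('i ^+ (f e))^*)).
  rewrite mulr_sumr; apply: eq_bigr => f _.
  rewrite /= !mxE !rmorphM /= (geC0_conj (x := sqrtd^-1)) ?invr_ge0 //.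
  by rewrite -!exprVn; ring.
rewrite phase_moment sqrtd_sq natrM natrX.
have pow4_neq0 : ((4 : C) ^+ d != 0) by rewrite expf_neq0 // pnatr_eq0.
by field; rewrite pow4_neq0 dC_neq0 addrC natr1 pnatr_eq0.
Qed.

Lemma basis_phase_moment : design_moment basis_phase_weight basis_phase_vec.
Proof.
move=> a b c e; rewrite big_sumType /= basis_part_moment phase_part_moment.
rewrite -mulrDr -!natrD; congr (_ * _%:R).
have [to_pairing of_pairing] := phase_exponent_dvd4P a b c e.
have -> : [forall t, 4 %| phase_exponent a b c e t]%N =
          ((a == c) && (b == e)) || ((a == e) && (b == c)).
  by apply/forallP/idP; [exact: to_pairing | exact: of_pairing].
exact: diagonal_plus_pairing.
Qed.

End BasisPhaseDesign.

Lemma design_moment_enum (C : numClosedFieldType) d (I : finType)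
    (w : I -> C) (x : I -> 'cV[C]_d) :
  design_moment w x ->
  design_moment (fun k : 'I_#|I| => w (enum_val k)) (fun k => x (enum_val k)).
Proof. by move=> Hm a b c e; rewrite -Hm (big_enum_val (A := I)). Qed.

Lemma design_exists (C : numClosedFieldType) d :
  (0 < d)%N -> exists n (x : 'I_n -> 'cV[C]_d), weighted_proj_2design x.
Proof.
move=> d_gt0; have Hm := design_moment_enum (basis_phase_moment C d_gt0).
exists #|{: 'I_d + {ffun 'I_d -> 'I_4}}|, (fun k => basis_phase_vec C (enum_val k)).
apply/weighted_design_momentP; split=> [k|]; first exact: basis_phase_unit.
exists (fun k => basis_phase_weight C (enum_val k)); split=> [k|].
  exact: basis_phase_weight_ge0.
split=> //; apply: (design_weights_sum1 d_gt0 _ Hm) => k.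
exact: basis_phase_unit.
Qed.

Lemma design_iff_eb_decomposition (C : numClosedFieldType) d n :
  (0 < d)%N ->
  (exists x : 'I_n -> 'cV[C]_d, weighted_proj_2design x) <->
  (exists R : 'I_n -> 'M[C]_d, eb_decomposition (@Zmap C d) R).
Proof.
move=> d_gt0; split=> [[x Hx] | [R HR]].
  exact: design_to_eb d_gt0 Hx.
exact: eb_to_design d_gt0 HR.
Qed.

Lemma ex_min_nat (P : nat -> Prop) : (exists n, P n) -> exists n, is_min_nat P n.
Proof.
move=> /(dec_inh_nat_subset_has_unique_least_element _ (fun n => classic (P n))).
by case=> n [[Pn n_min] _]; exists n; split=> // m /n_min /ssrnat.leP.
Qed.

Local Open Scope complex_scope.

Theorem theorem1 (R : realType) (d : nat) (hd : (0 < d)%N) :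
  exists n : nat,
    is_min_nat (fun n' => exists x : 'I_n' -> 'cV[R[i]]_d,
                            weighted_proj_2design x) n /\
    is_ebr (@Zmap R[i] d) n.
Proof.
have [n [[x Hx] n_min]] : exists n, is_min_nat
    (fun n' => exists x : 'I_n' -> 'cV[R[i]]_d, weighted_proj_2design x) n.
  by apply: ex_min_nat; have [n [x Hx]] := design_exists R[i] hd; exists n, x.
exists n; split; first by split; [exists x | ].
split; first by apply/design_iff_eb_decomposition; last exists x.
by move=> m /(design_iff_eb_decomposition _ _ hd)/n_min.
Qed.
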